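(* For every integer $n\ge 1$, \[ \sum_{k=0}^{n}\Big(-\frac{1}{4}\Big)^k\binom{n}{k}\binom{1+2k}{k}\,k^2H_{1+2k} =\frac{3n(2-3n)}{(3-2n)(1-4n^2)4^n}\binom{1+2n}{n} \Big\{2H_{1+2n}-\frac{3}{2}H_n-\frac{3-8n-12n^2}{1-4n^2}+\frac{9+n(3-25n+6n^2)}{3n(3-2n)(2-3n)}\Big\}-\frac{1}{1+n}. \]
   Context: For an integer $m\ge 0$, $H_m$ denotes the $m$-th harmonic number: $H_0=0$ and $H_m=\sum_{j=1}^m \frac1j$ for $m\ge1$. $\binom{n}{k}$ is the usual binomial coefficient. *)

From HB Require Import structures.
From mathcomp Require Import all_boot all_order all_algebra.
Set Implicit Arguments. Unset Strict Implicit. Unset Printing Implicit Defensive.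
Import Order.TTheory GRing.Theory Num.Theory.
Local Open Scope ring_scope.

Definition harm (m : nat) : rat := \sum_(1 <= j < m.+1) (j%:R)^-1.

(* Creative telescoping.  With F n k the summand, the explicit certificate
   G below satisfies c0(n) F n k + c1(n) F (n+1) k + c2(n) F (n+2) k
   = G n (k+1) - G n k, so summing over k shows that the sum obeys an
   inhomogeneous second-order recurrence in n.  The closed form obeys the same
   recurrence and agrees with the sum at n = 1, 2; as c2(n) != 0 for n >= 1,
   the two coincide. *)

From mathcomp Require Import all_boot all_order all_algebra.
From mathcomp Require Import ring lra zify.
Set Implicit Arguments. Unset Strict Implicit. Unset Printing Implicit Defensive.
Import Order.TTheory GRing.Theory Num.Theory.
Local Open Scope ring_scope.

Lemma recurrence2_uniq (F : fieldType) (a0 a1 a2 b u v : nat -> F) (n0 : nat) :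
    (forall n, (n0 <= n)%N -> a2 n != 0) ->
    (forall n, (n0 <= n)%N -> a0 n * u n + a1 n * u n.+1 + a2 n * u n.+2 = b n) ->
    (forall n, (n0 <= n)%N -> a0 n * v n + a1 n * v n.+1 + a2 n * v n.+2 = b n) ->
    u n0 = v n0 -> u n0.+1 = v n0.+1 ->
  forall n, (n0 <= n)%N -> u n = v n.
Proof.
move=> a2_neq0 rec_u rec_v u0 u1.
suff uv_from i : u (n0 + i)%N = v (n0 + i)%N /\ u (n0 + i).+1 = v (n0 + i).+1.
  by move=> n /subnKC <-; case: (uv_from (n - n0)%N).
elim: i => [|i [ui ui1]]; first by rewrite addn0.
rewrite addnS; split=> //; apply: (mulfI (a2_neq0 _ (leq_addr i n0))).
apply: (@addrI _ (a0 (n0 + i)%N * u (n0 + i)%N + a1 (n0 + i)%N * u (n0 + i).+1)).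
by rewrite rec_u ?leq_addr // ui ui1 rec_v ?leq_addr.
Qed.

Lemma sumr_telescope3 (R : nzRingType) (F0 F1 F2 G : nat -> R) (a0 a1 a2 : R) N :
    (forall k, a0 * F0 k + a1 * F1 k + a2 * F2 k = G k.+1 - G k) ->
  a0 * \sum_(0 <= k < N) F0 k + a1 * \sum_(0 <= k < N) F1 k
    + a2 * \sum_(0 <= k < N) F2 k = G N - G 0.
Proof.
move=> telescoping; rewrite !mulr_sumr -!big_split /=.
by rewrite (eq_bigr _ (fun k _ => telescoping k)) telescope_sumr.
Qed.

Lemma big_nat_widen_vanishing (R : nmodType) (F : nat -> R) (m N : nat) :
    (forall k, (m < k)%N -> F k = 0) -> (m < N)%N ->
  \sum_(0 <= k < m.+1) F k = \sum_(0 <= k < N) F k.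
Proof.
move=> F_vanish lt_mN; rewrite [RHS](big_cat_nat _ (n := m.+1)) //=.
rewrite [X in _ + X]big1_seq ?addr0 // => k /andP[_].
by rewrite mem_index_iota => /andP[/F_vanish].
Qed.

Lemma harmS (m : nat) : harm m.+1 = harm m + (m.+1)%:R^-1.
Proof. by rewrite /harm big_nat_recr. Qed.

Lemma harm_oddS (k : nat) :
  harm (1 + 2 * k.+1) = harm (1 + 2 * k) + (2 * k%:R + 2)^-1 + (2 * k%:R + 3)^-1.
Proof.
have -> : (1 + 2 * k.+1 = (1 + 2 * k).+2)%N by lia.
rewrite [LHS]harmS harmS; congr (_ + _^-1 + _^-1).
  by rewrite -[(1 + 2 * k).+1]addn1 !natrD; ring.
by rewrite -[(1 + 2 * k).+2]addn2 !natrD; ring.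
Qed.

Lemma mul_bin_odd_center (k : nat) :
  (k.+2 * 'C(1 + 2 * k.+1, k.+1) = 2 * (2 * k + 3) * 'C(1 + 2 * k, k))%N.
Proof.
have bin_even_center : 'C((1 + 2 * k).+1, k.+1) = (2 * 'C(1 + 2 * k, k))%N.
  apply/eqP; rewrite -(eqn_pmul2l (ltn0Sn k)) -mul_bin_diag /=.
  by apply/eqP; lia.
have bin_symm : 'C((1 + 2 * k).+2, k.+2) = 'C((1 + 2 * k).+2, k.+1).
  by rewrite -bin_sub; [congr 'C(_, _); lia | lia].
have -> : (1 + 2 * k.+1 = (1 + 2 * k).+2)%N by lia.
rewrite -bin_symm -mul_bin_diag /= bin_even_center; lia.
Qed.

Lemma bin_odd_centerS (k : nat) :
  ('C(1 + 2 * k.+1, k.+1))%:R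
    = 2 * (2 * k%:R + 3) / (k%:R + 2) * ('C(1 + 2 * k, k))%:R :> rat.
Proof.
have k_ge0 := ler0n rat k.
have := congr1 (fun m => m%:R : rat) (mul_bin_odd_center k).
rewrite /= !natrM -addn2 !natrD => center_rec.
apply: (@mulfI _ (k%:R + 2)); first lra.
by rewrite center_rec; field; lra.
Qed.

Definition hterm (n k : nat) : rat :=
  (- (1/4)) ^+ k * ('C(n, k))%:R * ('C(1 + 2 * k, k))%:R.

Lemma hterm_succn (n k : nat) :
  hterm n k = (n%:R + 1 - k%:R) / (n%:R + 1) * hterm n.+1 k.
Proof.
have n_ge0 := ler0n rat n.
suff bin_succn : ('C(n, k))%:R * (n%:R + 1) = ('C(n.+1, k))%:R * (n%:R + 1 - k%:R) :> rat.
  apply: (@mulIf _ (n%:R + 1)); first lra.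
  rewrite /hterm [LHS]mulrAC -[_ * _ * (n%:R + 1)]mulrA bin_succn; field; lra.
have [le_kn1|lt_n1k] := leqP k n.+1; last by rewrite !bin_small ?mul0r // ltnW.
have := congr1 (fun m => m%:R : rat) (mul_bin_down n.+1 k).
by rewrite /= !natrM natrB // -natr1 mulrC => ->; rewrite mulrC.
Qed.

Lemma hterm_succk (n k : nat) :
  hterm n k.+1
    = - (n%:R - k%:R) * (2 * k%:R + 3) / (2 * (k%:R + 1) * (k%:R + 2)) * hterm n k.
Proof.
have k_ge0 := ler0n rat k.
suff bin_succk : ('C(n, k.+1))%:R = (n%:R - k%:R) / (k%:R + 1) * ('C(n, k))%:R :> rat.
  by rewrite /hterm exprS bin_succk bin_odd_centerS; field; lra.
apply: (@mulfI _ (k%:R + 1)); first lra.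
have [le_kn|lt_nk] := leqP k n; last by rewrite !bin_small ?mulr0 // ltnW.
have := congr1 (fun m => m%:R : rat) (mul_bin_left n k).
by rewrite /= !natrM natrB // -natr1 => ->; field; lra.
Qed.

Definition summand (n k : nat) : rat := hterm n k * k%:R ^+ 2 * harm (1 + 2 * k).

Definition rec_cubic (x : rat) : rat := 18 * x ^+ 3 + 27 * x ^+ 2 - 22 * x - 6.

Definition rec_coef0 (x : rat) : rat :=
  (x + 1) * (x + 2) * (2 * x - 3) ^+ 2 * rec_cubic (x + 1).

Definition rec_coef1 (x : rat) : rat :=
  - 2 * (x + 2) ^+ 2
    * (24 + 112 * x - 237 * x ^+ 2 - 142 * x ^+ 3 + 180 * x ^+ 4 + 72 * x ^+ 5).

Definition rec_coef2 (x : rat) : rat :=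
  4 * (x + 1) ^+ 2 * (x + 2) * (x + 3) * rec_cubic x.

Definition cert_P (x y : rat) : rat :=
  (- 324 - 1002 * x - 1008 * x ^+ 2 - 366 * x ^+ 3 - 36 * x ^+ 4)
  + (642 + 2172 * x + 1962 * x ^+ 2 + 492 * x ^+ 3) * y
  + (- 420 - 1618 * x - 1096 * x ^+ 2 + 90 * x ^+ 3 + 108 * x ^+ 4) * y ^+ 2
  + (102 + 448 * x + 142 * x ^+ 2 - 216 * x ^+ 3 - 72 * x ^+ 4) * y ^+ 3.

Definition cert_R (x y : rat) : rat :=
  (162 + 501 * x + 504 * x ^+ 2 + 183 * x ^+ 3 + 18 * x ^+ 4)
  + (165 + 417 * x + 531 * x ^+ 2 + 303 * x ^+ 3 + 54 * x ^+ 4) * y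
  + (- 529 - 1735 * x - 1819 * x ^+ 2 - 717 * x ^+ 3 - 90 * x ^+ 4) * y ^+ 2
  + (- 151 - 213 * x - 305 * x ^+ 2 - 243 * x ^+ 3 - 54 * x ^+ 4) * y ^+ 3
  + (313 + 1094 * x + 1217 * x ^+ 2 + 522 * x ^+ 3 + 72 * x ^+ 4) * y ^+ 4
  + (- 68 - 344 * x - 324 * x ^+ 2 - 72 * x ^+ 3) * y ^+ 5.

(* Found by Zeilberger's algorithm extended to the harmonic factor;
   [summand_telescoping] only verifies it. *)
Definition cert (n k : nat) : rat :=
  hterm n.+2 k * (k%:R * (k%:R + 1) * cert_P n%:R k%:R * harm (1 + 2 * k)
                  + cert_R n%:R k%:R).

Lemma summand_telescoping (n k : nat) :
  rec_coef0 n%:R * summand n k + rec_coef1 n%:R * summand n.+1 k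
    + rec_coef2 n%:R * summand n.+2 k = cert n k.+1 - cert n k.
Proof.
rewrite /summand /cert harm_oddS (hterm_succk n.+2 k) (hterm_succn n k) (hterm_succn n.+1 k).
rewrite -(natr1 n.+1) -(natr1 n) -(natr1 k) /rec_coef0 /rec_coef1 /rec_coef2 /rec_cubic /cert_P /cert_R.
by field; repeat (apply/andP; split); move: (ler0n rat n) (ler0n rat k); lra.
Qed.

Definition bin_harm_sum (n : nat) : rat := \sum_(0 <= k < n.+1) summand n k.

Lemma summand_eq0 (n k : nat) : (n < k)%N -> summand n k = 0.
Proof. by move=> lt_nk; rewrite /summand /hterm bin_small // !(mulr0, mul0r). Qed.

Lemma hterm0 (n : nat) : hterm n 0 = 1.
Proof. by rewrite /hterm expr0 !bin0 !mulr1. Qed.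

Lemma cert0 (n : nat) : cert n 0 = cert_R n%:R 0.
Proof.
rewrite /cert hterm0 mul1r mulr0n; move: (cert_P _ _) (harm _) => P h.
by rewrite !mul0r add0r.
Qed.

Lemma cert_eq0 (n k : nat) : (n.+2 < k)%N -> cert n k = 0.
Proof. by move=> lt_n2k; rewrite /cert /hterm bin_small // mulr0 !mul0r. Qed.

Lemma bin_harm_sum_recurrence (n : nat) :
  rec_coef0 n%:R * bin_harm_sum n + rec_coef1 n%:R * bin_harm_sum n.+1 + rec_coef2 n%:R * bin_harm_sum n.+2
    = - cert_R n%:R 0.
Proof.
rewrite /bin_harm_sum !(big_nat_widen_vanishing (N := n.+3) (@summand_eq0 _)) //; last lia.
have cert_vanish := cert_eq0 (ltnSn n.+2).
by rewrite (sumr_telescope3 _ (summand_telescoping n)) cert0 cert_vanish sub0r.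
Qed.

Definition closed_form (n : nat) : rat :=
  (3 * n%:R * (2 - 3 * n%:R))
      / ((3 - 2 * n%:R) * (1 - 4 * n%:R ^+ 2) * 4 ^+ n)
      * ('C(1 + 2 * n, n))%:R
      * (2 * harm (1 + 2 * n) - 3 / 2 * harm n
         - (3 - 8 * n%:R - 12 * n%:R ^+ 2) / (1 - 4 * n%:R ^+ 2)
         + (9 + n%:R * (3 - 25 * n%:R + 6 * n%:R ^+ 2))
             / (3 * n%:R * (3 - 2 * n%:R) * (2 - 3 * n%:R)))
    - 1 / (1 + n%:R).

Lemma closed_form_recurrence (n : nat) : (1 <= n)%N ->
  rec_coef0 n%:R * closed_form n + rec_coef1 n%:R * closed_form n.+1 + rec_coef2 n%:R * closed_form n.+2
    = - cert_R n%:R 0.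
Proof.
move=> n_ge1.
have three_sub_neq0 : 3 - 2 * n%:R != 0 :> rat.
  case: n n_ge1 => [//|[_|m _]]; first by [].
  by move: (ler0n rat m); rewrite -!natr1; lra.
have n_ge1R : 1 <= n%:R :> rat by rewrite ler1n.
rewrite /closed_form (bin_odd_centerS n.+1) (bin_odd_centerS n) (harm_oddS n.+1) (harm_oddS n).
rewrite (harmS n.+1) (harmS n) !exprS -(natr1 n.+1) -(natr1 n).
rewrite /rec_coef0 /rec_coef1 /rec_coef2 /rec_cubic /cert_R.
field; rewrite expf_neq0 // three_sub_neq0 /=.
by repeat (apply/andP; split); move: n_ge1R; nra.
Qed.

Lemma bin_harm_sum1 : bin_harm_sum 1 = closed_form 1.
Proof. by apply/eqP; rewrite /bin_harm_sum /closed_form /summand /hterm /harm unlock; vm_compute. Qed.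

Lemma bin_harm_sum2 : bin_harm_sum 2 = closed_form 2.
Proof. by apply/eqP; rewrite /bin_harm_sum /closed_form /summand /hterm /harm unlock; vm_compute. Qed.

Lemma zeil_cubic_gt0 (x : rat) : 1 <= x -> 0 < rec_cubic x.
Proof.
move=> x_ge1; have x_le_x2 : x <= x ^+ 2 by nra.
have x2_le_x3 : x ^+ 2 <= x ^+ 3 by rewrite exprS; nra.
by rewrite /rec_cubic; lra.
Qed.

Lemma rec_coef2_neq0 (x : rat) : 1 <= x -> rec_coef2 x != 0.
Proof.
move=> x_ge1; rewrite /rec_coef2; move: (rec_cubic x) (zeil_cubic_gt0 x_ge1) => c c_gt0.
by rewrite lt0r_neq0 // !mulr_gt0 ?exprn_gt0 //; lra.
Qed.

Theorem theorem12 (n : nat) (hn : (1 <= n)%N) :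
  \sum_(0 <= k < n.+1)
     (- (1/4 : rat)) ^+ k * ('C(n, k))%:R * ('C(1 + 2 * k, k))%:R
       * (k%:R) ^+ 2 * harm (1 + 2 * k)
  = (3 * n%:R * (2 - 3 * n%:R))
      / ((3 - 2 * n%:R) * (1 - 4 * n%:R ^+ 2) * 4 ^+ n)
      * ('C(1 + 2 * n, n))%:R
      * (2 * harm (1 + 2 * n) - 3 / 2 * harm n
         - (3 - 8 * n%:R - 12 * n%:R ^+ 2) / (1 - 4 * n%:R ^+ 2)
         + (9 + n%:R * (3 - 25 * n%:R + 6 * n%:R ^+ 2))
             / (3 * n%:R * (3 - 2 * n%:R) * (2 - 3 * n%:R)))
    - 1 / (1 + n%:R).
Proof.
apply: (@recurrence2_uniq _ (fun m => rec_coef0 m%:R) (fun m => rec_coef1 m%:R)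
  (fun m => rec_coef2 m%:R) (fun m => - cert_R m%:R 0) bin_harm_sum closed_form 1) hn.
- by move=> m m_ge1; rewrite rec_coef2_neq0 ?ler1n.
- by move=> m _; exact: bin_harm_sum_recurrence.
- exact: closed_form_recurrence.
- exact: bin_harm_sum1.
- exact: bin_harm_sum2.
Qed.
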